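(* In the setting described in the context, for every $j\in[\varepsilon^{-1}]$ it holds that $$\mathbb{E}\left[v(\gamma^{j-1})\right]=(1-(j-1)\varepsilon)\cdot v(S^* )=(1-(j-1)\varepsilon)\cdot\mathrm{OPT}(\mathcal{I}).$$
   Context: A CMK instance is $\mathcal{I}=(I,w,v,m,k)$ with $I$ a finite item set, $w:I\to[0,1]$, $v:I\to\mathbb{R}_{\ge0}$, $m,k\in\mathbb{N}_{>0}$. A configuration is $C\subseteq I$ with $|C|\le k$ and $\sum_{i\in C}w(i)\le1$; $\mathcal{C}$ is the set of configurations and $\mathcal{C}(i)=\{C\in\mathcal{C}:i\in C\}$. A solution is a tuple of $m$ configurations, with value $v$ of their union; $\mathrm{OPT}(\mathcal{I})$ is the maximum value. A fractional solution is $x\in\mathbb{R}_{\ge0}^{\mathcal{C}}$, with $\mathrm{cover}_i(x)=\sum_{C\in\mathcal{C}(i)}x_C$, $\|x\|=\sum_Cx_C$; it is feasible if $\mathrm{cover}(x)\in[0,1]^I$; for $y\in\mathbb{R}^I$, $v(y)=\sum_iy_iv(i)$, and $v(x)=v(\mathrm{cover}(x))$. For $S\subseteq I$ and $\ell\in\mathbb{N}$, $\mathrm{LP}(S,\ell)$ is: maximize $v(x)$ over feasible fractional solutions $x$ with $x_C=0$ whenever $C\not\subseteq S$, and $\|x\|=\ell$. For $\|x\|\ne0$, a random configuration $R$ is distributed by $x$ ($R\sim x$) if $\Pr(R=C)=x_C/\|x\|$. Given $\varepsilon\in(0,0.1)$, $\mathcal{I}$ is $\varepsilon$-simple if $m>\exp(\exp(\varepsilon^{-30}))$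 and $\varepsilon m\in\mathbb{N}$. Iterative randomized rounding: let $\varepsilon\in(0,0.1)$ with $\varepsilon^{-1/2}\in\mathbb{N}$ and $\mathcal{I}$ be $\varepsilon$-simple; let $q=\varepsilon m$ and $S_0=I$. For $j=1,\dots,\varepsilon^{-1}$: let $m_j=m(1-(j-1)\varepsilon)$; let $x^j$ be a $(1-\varepsilon)$-approximate solution of $\mathrm{LP}(S_{j-1},m_j)$ (a feasible solution of value at least $(1-\varepsilon)$ times its optimum), determined by the outcomes of the samples of previous iterations; sample independently $R^j_1,\dots,R^j_q\sim x^j$; set $S_j=S_{j-1}\setminus\bigcup_{b=1}^qR^j_b$. Let $\mathcal{F}_0$ be the trivial $\sigma$-algebra and $\mathcal{F}_j$ the $\sigma$-algebra generated by $\{R^{j'}_b: j'\le j,\ b\in[q]\}$. Fix an optimal solution $(C^*_1,\dots,C^*_m)$ and let $S^*=\bigcup_bC^*_b$ (so $v(S^* )=\mathrm{OPT}(\mathcal{I})$). Define $\gamma^0=\mathbb{1}_{S^*}\in\{0,1\}^I$ (indicator vector of $S^*$). For $j=1,\dots,\varepsilon^{-1}-1$ define $\lambda^j\in\mathbb{R}^I_{\ge0}$ by $\lambda^j_i=\frac{1-j\varepsilon}{1-(j-1)\varepsilon}\cdot\frac{1}{\Pr(i\in S_j\mid\mathcal{F}_{j-1})}\cdot\gamma^{j-1}_i$ for $i\in S_{j-1}$ (this conditional probability is positive for such $i$) and $\lambda^j_i=0$ for $i\notin S_{j-1}$; and define $\gamma^j_i=\mathbb{1}_{i\in S_j}\cdot\lambda^j_i$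 for all $i\in I$. *)

From HB Require Import structures.
From mathcomp Require Import all_boot all_order all_algebra.
From mathcomp Require Import reals sequences exp.
Set Implicit Arguments. Unset Strict Implicit. Unset Printing Implicit Defensive.
Import Order.TTheory GRing.Theory Num.Theory.
Local Open Scope ring_scope.

Section CMK.
Variables (R : realType) (I : finType).

(* Configurations are subsets of I; a fractional solution is a function on
   {set I} vanishing outside the configurations (i.e. an element of R^C). *)
Definition is_config (w : I -> R) (k : nat) (C : {set I}) : bool :=
  (#|C| <= k)%N && (\sum_(i in C) w i <= 1).

Definition cover w k (x : {set I} -> R) (i : I) : R :=
  \sum_(C : {set I} | is_config w k C && (i \in C)) x C.

Definition fnorm w k (x : {set I} -> R) : R :=
  \sum_(C : {set I} | is_config w k C) x C.

Definition frac_sol w k (x : {set I} -> R) : Prop :=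
  forall C : {set I}, 0 <= x C /\ (~~ is_config w k C -> x C = 0).

Definition feasible w k (x : {set I} -> R) : Prop :=
  frac_sol w k x /\ forall i, cover w k x i <= 1.

Definition vvec (v : I -> R) (y : I -> R) : R := \sum_i y i * v i.
Definition vset (v : I -> R) (S : {set I}) : R := \sum_(i in S) v i.
Definition vsol v w k (x : {set I} -> R) : R := vvec v (cover w k x).

Definition LP_feas w k (S : {set I}) (l : R) (x : {set I} -> R) : Prop :=
  [/\ feasible w k x, (forall C : {set I}, ~~ (C \subset S) -> x C = 0) & fnorm w k x = l].

Definition approx_LP (eps : R) v w k (S : {set I}) (l : R) (x : {set I} -> R) :=
  LP_feas w k S l x /\
  forall y, LP_feas w k S l y -> (1 - eps) * vsol v w k y <= vsol v w k x.

Definition OPT v w k (m : nat) : R :=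
  \big[Num.max/0]_(C : {ffun 'I_m -> {set I}} | [forall b, is_config w k (C b)])
     vset v (\bigcup_(b < m) C b).

(* The outcome of one iteration: q sampled configurations. *)
Definition round (q : nat) := {ffun 'I_q -> {set I}}.
Definition round0 (q : nat) : round q := [ffun=> set0].

(* A strategy maps the history of previous outcomes to the fractional
   solution x^j used in the next iteration. *)
Variable q : nat.
Variables (w : I -> R) (k : nat).
Variable X : seq (round q) -> ({set I} -> R).

(* probability of a given outcome r when R_1..R_q ~ x independently *)
Definition rprob (x : {set I} -> R) (r : round q) : R :=
  \prod_(b < q) (x (r b) / fnorm w k x).

Definition Sset (h : seq (round q)) : {set I} :=
  foldl (fun S (r : round q) => S :\: \bigcup_(b < q) r b) setT h.

Definition hprob (h : seq (round q)) : R :=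
  \prod_(t < size h) rprob (X (take t h)) (nth (round0 q) h t).

(* Pr(i \in S_j | F_{j-1}) when the history up to iteration j-1 is h *)
Definition pstay (h : seq (round q)) (i : I) : R :=
  \sum_(r : round q) rprob (X h) r * (i \in Sset (rcons h r))%:R.

(* gamma^t (as a function of the history h, of length >= t) *)
Fixpoint gamma (eps : R) (Sstar : {set I}) (h : seq (round q)) (t : nat) : I -> R :=
  fun i =>
  match t with
  | 0 => (i \in Sstar)%:R
  | t'.+1 =>
      let lambda :=
        if i \in Sset (take t' h) then
          (1 - t'.+1%:R * eps) / (1 - t'%:R * eps) * (pstay (take t' h) i)^-1
            * gamma eps Sstar h t' i
        else 0 in
      (i \in Sset (take t'.+1 h))%:R * lambda
  end.

End CMK.

(* By induction on t, E[gamma^t_i] = (1 - t eps) [i in S^*] coordinatewise: conditioned on the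
   history, gamma^(t+1)_i has expectation (1-(t+1)eps)/(1-t eps) gamma^t_i, because lambda
   divides by exactly the probability that i survives the q independent samples of round
   t+1, and that probability is positive since x^(t+1) is feasible with ||x|| > 1 (by
   epsilon-simplicity). Linearity of v then gives E[v(gamma^t)] = (1 - t eps) OPT. *)

From Pilot Require Import Defs.
From HB Require Import structures.
From mathcomp Require Import all_boot all_order all_algebra.
From mathcomp Require Import reals sequences exp.
Set Implicit Arguments.
Unset Strict Implicit.
Unset Printing Implicit Defensive.

Import Order.TTheory GRing.Theory Num.Theory.
Local Open Scope ring_scope.

Lemma big_tuple_rcons (V : nmodType) (T : finType) t (F : seq T -> V) :
  \sum_(h : t.+1.-tuple T) F h = \sum_(h : t.-tuple T) \sum_(r : T) F (rcons h r).
Proof.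
have rcons_bij : bijective (fun p : t.-tuple T * T => rcons_tuple p.1 p.2).
  apply: inj_card_bij; last by rewrite card_prod !card_tuple expnSr.
  by move=> [a r] [b s] /(congr1 val) /rcons_inj [/val_inj -> ->].
by rewrite pair_bigA (reindex _ (onW_bij _ rcons_bij)).
Qed.

Section FractionalSolution.
Variables (R : realType) (I : finType) (w : I -> R) (k : nat) (x : {set I} -> R).
Hypothesis x_frac : frac_sol w k x.

Lemma sum_frac_sol : \sum_(C : {set I}) x C = fnorm w k x.
Proof.
rewrite /fnorm [RHS]big_mkcond; apply: eq_bigr => C _.
by case: ifP => // /negbT /(proj2 (x_frac C)).
Qed.

Lemma sum_frac_sol_cover i : \sum_(C : {set I}) x C * (i \in C)%:R = Defs.cover w k x i.
Proof.
rewrite /cover [RHS]big_mkcond; apply: eq_bigr => C _.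
have [Cc|/(proj2 (x_frac C)) ->] := boolP (is_config w k C); last by rewrite mul0r.
by case: (i \in C); rewrite ?mulr1 ?mulr0.
Qed.

Lemma rprob_ge0 q (r : round I q) : 0 < fnorm w k x -> 0 <= rprob w k x r.
Proof.
by move=> N0; apply: prodr_ge0 => b _; rewrite divr_ge0 ?(proj1 (x_frac _)) ?ltW.
Qed.

End FractionalSolution.

Section History.
Variables (R : realType) (I : finType) (q : nat) (w : I -> R) (k : nat).
Variable X : seq (round I q) -> ({set I} -> R).
Variables (eps : R) (S : {set I}).

Local Notation hprob := (hprob w k X).
Local Notation pstay := (pstay w k X).
Local Notation gamma := (gamma w k X eps S).

Lemma hprob_rcons h r : hprob (rcons h r) = hprob h * rprob w k (X h) r.
Proof.
rewrite /hprob size_rcons big_ord_recr /= -cats1 take_size_cat // nth_cat ltnn subnn.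
congr (_ * _); apply: eq_bigr => j _.
by rewrite takel_cat ?nth_cat ?ltn_ord // ltnW.
Qed.

Lemma Sset_rcons h r : Sset (rcons h r : seq (round I q)) = Sset h :\: \bigcup_(b < q) r b.
Proof. by rewrite /Sset foldl_rcons. Qed.

Lemma gamma_cat h s t : (t <= size h)%N -> gamma (h ++ s) t =1 gamma h t.
Proof.
elim: t => [|t IH] Ht i //=.
by rewrite !takel_cat ?IH // ltnW.
Qed.

Lemma gamma_notin_Sset h i : i \notin Sset h -> gamma h (size h) i = 0.
Proof.
case/lastP: h => [|h r]; first by rewrite inE.
rewrite size_rcons /= take_oversize ?size_rcons // => /negbTE ->.
by rewrite mul0r.
Qed.

Lemma pstay_prod h i : i \in Sset h ->
  pstay h i = \prod_(b < q) \sum_(C : {set I}) X h C / fnorm w k (X h) * (i \notin C)%:R.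
Proof.
move=> Hi; rewrite bigA_distr_bigA /pstay; apply: eq_bigr => r _.
rewrite Sset_rcons inE Hi andbT [RHS]big_split /=; congr (_ * _).
have [/bigcupP [b _ Hb]|/bigcupP Hnot] := boolP (i \in \bigcup_(b < q) r b).
  by rewrite (bigD1 b) //= Hb mul0r.
by rewrite big1 // => b _; case: (boolP (i \in r b)) => // Hb; case: Hnot; exists b.
Qed.

Lemma pstay_gt0 h i : feasible w k (X h) -> 1 < fnorm w k (X h) -> i \in Sset h ->
  0 < pstay h i.
Proof.
move=> [x_frac x_cover] N1 Hi; have N0 : 0 < fnorm w k (X h) by apply: lt_trans N1.
rewrite pstay_prod //; apply: prodr_gt0 => b _.
have -> : \sum_(C : {set I}) X h C / fnorm w k (X h) * (i \notin C)%:R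
    = (fnorm w k (X h) - Defs.cover w k (X h) i) / fnorm w k (X h).
  rewrite -sum_frac_sol // -sum_frac_sol_cover // -sumrB mulr_suml; apply: eq_bigr => C _.
  by case: (i \in C); rewrite /= ?mulr1 ?mulr0 ?subr0 ?subrr ?mul0r.
by rewrite divr_gt0 // subr_gt0 (le_lt_trans (x_cover i)).
Qed.

(* The one-step conditional expectation: E[gamma^(t+1)_i | F_t] = c_t gamma^t_i, since the
   factor 1/Pr(i in S_(t+1) | F_t) in lambda cancels the survival probability. *)
Lemma sum_rprob_gamma_rcons h t i : size h = t -> (i \in Sset h -> pstay h i != 0) ->
  \sum_r rprob w k (X h) r * gamma (rcons h r) t.+1 i
    = (1 - t.+1%:R * eps) / (1 - t%:R * eps) * gamma h t i.
Proof.
move=> <- pstay_neq0.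
have gamma_rcons r : gamma (rcons h r) (size h).+1 i
    = (i \in Sset (rcons h r))%:R * (if i \in Sset h then
        (1 - (size h).+1%:R * eps) / (1 - (size h)%:R * eps) * (pstay h i)^-1
          * gamma h (size h) i else 0).
  by rewrite /= take_oversize ?size_rcons // -cats1 take_size_cat // gamma_cat.
under eq_bigr do rewrite gamma_rcons mulrA.
rewrite -mulr_suml.
have [Hi|Hi] := boolP (i \in Sset h); last by rewrite gamma_notin_Sset // !mulr0.
by rewrite mulrCA mulrA divfK ?pstay_neq0.
Qed.

End History.

Section Expectation.
Variables (R : realType) (I : finType) (q : nat) (w : I -> R) (k : nat).
Variable X : seq (round I q) -> ({set I} -> R).
Variables (eps : R) (S : {set I}) (T : nat).
Hypothesis good_history : forall h, (size h < T)%N -> 0 < hprob w k X h ->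
  feasible w k (X h) /\ 1 < fnorm w k (X h).
Hypothesis eps_small : forall t, (t < T)%N -> 1 - t%:R * eps != 0.

Lemma hprob_ge0 h : (size h <= T)%N -> 0 <= hprob w k X h.
Proof.
elim/last_ind: h => [_|h r IH]; first by rewrite /hprob big_ord0.
rewrite size_rcons hprob_rcons => hT.
have := IH (ltnW hT); rewrite le0r => /predU1P [->|hp]; first by rewrite mul0r.
have [[x_frac _] N1] := good_history hT hp.
by rewrite mulr_ge0 ?(ltW hp) // (rprob_ge0 x_frac) // (lt_trans ltr01).
Qed.

Lemma sum_hprob_gamma t i : (t < T)%N ->
  \sum_(h : t.-tuple (round I q)) hprob w k X h * gamma w k X eps S h t i
    = (1 - t%:R * eps) * (i \in S)%:R.
Proof.
elim: t => [_|t IH tT].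
  rewrite (big_pred1 [tuple]) => [|h]; last by apply/esym/eqP; exact: tuple0.
  by rewrite /hprob big_ord0 mul1r mul0r subr0 mul1r.
have -> : (1 - t.+1%:R * eps) * (i \in S)%:R
    = (1 - t.+1%:R * eps) / (1 - t%:R * eps) * ((1 - t%:R * eps) * (i \in S)%:R).
  by rewrite mulrA divfK ?eps_small // ltnW.
rewrite -IH; last exact: ltnW.
rewrite mulr_sumr (big_tuple_rcons _ (fun s => hprob w k X s * gamma w k X eps S s t.+1 i)).
apply: eq_bigr => h _; have sh := size_tuple h.
have hT : (size h < T)%N by rewrite sh; apply: ltnW.
under eq_bigr do rewrite hprob_rcons -mulrA.
rewrite -mulr_sumr mulrCA.
have := hprob_ge0 (ltnW hT); rewrite le0r => /predU1P [->|hp]; first by rewrite !mul0r ?mulr0.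
have [h_feas N1] := good_history hT hp.
by rewrite (sum_rprob_gamma_rcons _ _ sh) // => Hi; rewrite gt_eqF // (pstay_gt0 h_feas N1 Hi).
Qed.

End Expectation.

Lemma sum_vvec_eq_vset (R : realType) (I J : finType) (p : J -> R) (g : J -> I -> R)
    (v : I -> R) (a : R) (S : {set I}) :
  (forall i, \sum_j p j * g j i = a * (i \in S)%:R) ->
  \sum_j p j * vvec v (g j) = a * vset v S.
Proof.
move=> Hg; rewrite /vvec /vset mulr_sumr [RHS]big_mkcond /=.
under eq_bigr do rewrite mulr_sumr.
rewrite exchange_big; apply: eq_bigr => i _.
under eq_bigr do rewrite mulrA.
by rewrite -mulr_suml Hg; case: (i \in S); rewrite ?mulr1 ?mul1r ?mulr0 ?mul0r.
Qed.

Lemma natr_sqr_sqrt_inv (R : realType) (eps : R) (n : nat) : 0 < eps ->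
  Num.sqrt eps^-1 = n%:R -> (n ^ 2)%:R * eps = 1.
Proof.
by move=> e0 Hn; rewrite natrX -Hn sqr_sqrtr ?invr_ge0 ?ltW // mulVf // gt_eqF.
Qed.

Lemma expR_expR_lt_mul_gt1 (R : realType) (eps : R) (m : nat) : 0 < eps <= 1 ->
  expR (expR (eps ^- 30)) < m%:R -> 1 < m%:R * eps.
Proof.
move=> /andP [e0 e1] Hm; rewrite -ltr_pdivrMr // div1r.
apply: le_lt_trans Hm; apply: le_trans (expR_ge1Dx _); apply: ler_wpDl => //.
apply: le_trans (expR_ge1Dx _); apply: ler_wpDl => //.
by rewrite -exprVn ler_eXnr // invr_ge1 // unitfE gt_eqF.
Qed.

Theorem lemma3p4 (R : realType) (I : finType) (w v : I -> R) (m k : nat)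
  (Hw : forall i, 0 <= w i <= 1) (Hv : forall i, 0 <= v i)
  (Hm : (0 < m)%N) (Hk : (0 < k)%N)
  (eps : R) (Heps : 0 < eps < 1 / 10%:R)
  (n : nat) (Hn : Num.sqrt (eps^-1) = n%:R)
  (Hsimple : expR (expR (eps ^- 30)) < m%:R)
  (q : nat) (Hq : q%:R = eps * m%:R)
  (X : seq (round I q) -> ({set I} -> R))
  (HX : forall h : seq (round I q), (size h < n ^ 2)%N -> 0 < hprob w k X h ->
        approx_LP eps v w k (Sset h) (m%:R * (1 - (size h)%:R * eps)) (X h))
  (Cstar : {ffun 'I_m -> {set I}})
  (HCstar : forall b, is_config w k (Cstar b))
  (Hopt : vset v (\bigcup_(b < m) Cstar b) = OPT v w k m) :
  forall j : nat, (1 <= j <= n ^ 2)%N ->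
    \sum_(h : (j.-1).-tuple (round I q))
        hprob w k X h * vvec v (gamma w k X eps (\bigcup_(b < m) Cstar b) h j.-1)
      = (1 - (j.-1)%:R * eps) * vset v (\bigcup_(b < m) Cstar b)
    /\ (1 - (j.-1)%:R * eps) * vset v (\bigcup_(b < m) Cstar b)
      = (1 - (j.-1)%:R * eps) * OPT v w k m.
Proof.
move=> j /andP [j1 jn]; have tT : (j.-1 < n ^ 2)%N by case: j j1 jn.
split; last by rewrite Hopt.
have /andP [e0 e1] := Heps.
have e_le1 : eps <= 1 by apply/ltW/(lt_trans e1); rewrite ltr_pdivrMr ?ltr0n // mul1r ltr1n.
have n2e := natr_sqr_sqrt_inv e0 Hn.
have me1 : 1 < m%:R * eps by apply: expR_expR_lt_mul_gt1; rewrite ?e0.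
apply: sum_vvec_eq_vset => i; apply: (@sum_hprob_gamma _ _ _ _ _ _ _ _ (n ^ 2)) => // [h hT hp|t tn].
- have [[h_feas _ ->] _] := HX h hT hp; split=> //.
  apply: (lt_le_trans me1); rewrite ler_pM2l ?ltr0n // lerBrDr.
  have : (size h).+1%:R * eps <= 1 by rewrite -[leRHS]n2e ler_pM2r // ler_nat.
  by rewrite -natr1 mulrDl mul1r addrC.
- by rewrite subr_eq0 eq_sym lt_eqF // -[ltRHS]n2e ltr_pM2r // ltr_nat.
Qed.
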